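(* Let $P$ be a generic set of $n$ points in the plane in convex position. Then $\operatorname{cr}(P)\ge \lfloor n/2\rfloor -1$.
   Context: A finite planar point set is in general position if no three of its points are collinear. It is generic if it is in general position and every subset of it has a unique (Euclidean) minimum spanning tree (MST); for a generic set $X$, $T_X$ denotes the MST of $X$, drawn with straight-line edges. For disjoint point sets $R,B$ with $R\cup B$ generic, $\operatorname{cr}(R,B)$ denotes the number of crossings between the edges of $T_R$ and the edges of $T_B$. For a generic point set $P$, $\operatorname{cr}(P)=\max \operatorname{cr}(R,B)$, the maximum over all partitions $P=R\cup B$ into two disjoint sets. *)

From HB Require Import structures.
From mathcomp Require Import all_boot all_order all_algebra.
From mathcomp Require Import boolp reals.

Set Implicit Arguments.
Unset Strict Implicit.
Unset Printing Implicit Defensive.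

Import Order.TTheory GRing.Theory Num.Theory.
Local Open Scope ring_scope.

Section MSTCrossings.
Variable R : realType.
Variable n : nat.
Variable p : 'I_n -> R * R.

Definition dist (a b : R * R) : R :=
  Num.sqrt ((a.1 - b.1) ^+ 2 + (a.2 - b.2) ^+ 2).

(* an edge {i,j} is stored as the ordered pair (i,j) with i < j *)
Definition edge := ('I_n * 'I_n)%type.

Definition adj (E : {set edge}) : rel 'I_n :=
  fun u v => ((u, v) \in E) || ((v, u) \in E).

Definition edges_in (S : {set 'I_n}) (E : {set edge}) : Prop :=
  forall e, e \in E -> [/\ (e.1 < e.2)%N, e.1 \in S & e.2 \in S].

Definition connected_on (S : {set 'I_n}) (E : {set edge}) : Prop :=
  forall u v, u \in S -> v \in S ->
    exists s : seq 'I_n, path (adj E) u s /\ last u s = v.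

Definition acyclic (E : {set edge}) : Prop :=
  forall s : seq 'I_n, uniq s -> (2 < size s)%N -> ~~ cycle (adj E) s.

Definition spanning_tree (S : {set 'I_n}) (E : {set edge}) : Prop :=
  [/\ edges_in S E, connected_on S E & acyclic E].

Definition weight (E : {set edge}) : R :=
  \sum_(e in E) dist (p e.1) (p e.2).

Definition is_MST (S : {set 'I_n}) (E : {set edge}) : Prop :=
  spanning_tree S E /\
  forall E', spanning_tree S E' -> weight E <= weight E'.

Definition collinear (a b c : R * R) : bool :=
  (b.1 - a.1) * (c.2 - a.2) - (b.2 - a.2) * (c.1 - a.1) == 0.

Definition general_position : Prop :=
  forall i j k, i != j -> j != k -> i != k -> ~~ collinear (p i) (p j) (p k).

Definition generic : Prop :=
  [/\ injective p, general_position &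
      forall S : {set 'I_n}, exists! E, is_MST S E].

(* T_X : the MST of the subset X (well defined for generic sets) *)
Definition MST (S : {set 'I_n}) : {set edge} :=
  odflt set0 [pick E | `[< is_MST S E >]].

Definition seg_cross (a b c d : R * R) : Prop :=
  exists t s : R, [/\ 0 <= t <= 1, 0 <= s <= 1,
    (1 - t) * a.1 + t * b.1 = (1 - s) * c.1 + s * d.1 &
    (1 - t) * a.2 + t * b.2 = (1 - s) * c.2 + s * d.2].

(* cr(R,B) with R = A and B = complement of A *)
Definition crRB (A : {set 'I_n}) : nat :=
  #|[set ef : edge * edge | (ef.1 \in MST A) && (ef.2 \in MST (~: A)) &&
      `[< seg_cross (p ef.1.1) (p ef.1.2) (p ef.2.1) (p ef.2.2) >]]|.

Definition cr : nat := \max_(A : {set 'I_n}) crRB A.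

Definition in_hull_of_others (i : 'I_n) : Prop :=
  exists lam : 'I_n -> R,
    [/\ forall j, 0 <= lam j, lam i = 0, \sum_j lam j = 1,
        \sum_j lam j * (p j).1 = (p i).1 &
        \sum_j lam j * (p j).2 = (p i).2].

Definition convex_position : Prop := forall i, ~ in_hull_of_others i.

End MSTCrossings.

From mathcomp Require Import all_boot all_order all_algebra.
From mathcomp Require Import boolp reals.
From mathcomp Require Import ring lra.

(* Sort the points by angle around their lexicographically smallest point o and
   colour them alternately by the parity of their rank, o getting rank 0: at
   least n/2 points are red.  If ab is an edge of a red spanning tree with
   rank a < rank b, the blue point c of rank (rank a).+1 lies angularly between
   a and b, so by convex position it is on the other side of the line ab from o.
   The path from o to c in a blue spanning tree therefore has an edge separated
   by the line ab, and in convex position such an edge crosses the segment ab.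
   So each of the at least n/2 - 1 red edges is crossed. *)

Set Implicit Arguments.
Unset Strict Implicit.
Unset Printing Implicit Defensive.
Import Order.TTheory GRing.Theory Num.Theory.
Local Open Scope ring_scope.

Section Orientation.
Variable R : realFieldType.
Implicit Types a b c d o q x : R * R.

Definition orient a b c : R :=
  (b.1 - a.1) * (c.2 - a.2) - (b.2 - a.2) * (c.1 - a.1).

Lemma orient_rr a b : orient a b b = 0.
Proof. rewrite /orient; ring. Qed.

Lemma orient_rot a b c : orient a b c = orient b c a.
Proof. rewrite /orient; ring. Qed.

Lemma orientNl a b c : orient b a c = - orient a b c.
Proof. rewrite /orient; ring. Qed.

Lemma orientNr a b c : orient a c b = - orient a b c.
Proof. rewrite /orient; ring. Qed.

Lemma orient_diff_swap a b c d :
  orient c d a - orient c d b = orient a b d - orient a b c.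
Proof. rewrite /orient; ring. Qed.

Definition in_triangle x a b c := exists k1 k2 k3 : R,
  [/\ 0 <= k1, 0 <= k2, 0 <= k3, k1 + k2 + k3 = 1 &
      x.1 = k1 * a.1 + k2 * b.1 + k3 * c.1 /\
      x.2 = k1 * a.2 + k2 * b.2 + k3 * c.2].

Lemma line_intersection a b c d (t s : R) :
  orient a b c != orient a b d ->
  t = orient c d a / (orient c d a - orient c d b) ->
  s = orient a b c / (orient a b c - orient a b d) ->
  (1 - t) * a.1 + t * b.1 = (1 - s) * c.1 + s * d.1 /\
  (1 - t) * a.2 + t * b.2 = (1 - s) * c.2 + s * d.2.
Proof.
rewrite -subr_eq0 => Dne -> ->.
have Ene : orient c d a - orient c d b != 0 by rewrite orient_diff_swap -opprB oppr_eq0.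
move: Dne Ene; rewrite /orient.
case: a b c d => [a1 a2] [b1 b2] [c1 c2] [d1 d2] /= Dne Ene.
by split; field; rewrite Dne Ene.
Qed.

Lemma ratio_opp_sign (u v : R) : u * v < 0 -> 0 <= u / (u - v) <= 1.
Proof.
move=> uv; have uv_ne : u - v != 0.
  apply/eqP => e; have e' : v = u by lra.
  by rewrite e' in uv; nra.
have def : u / (u - v) * (u - v) = u by rewrite mulfVK.
set r := u / (u - v) in def *.
by have [u0|u0] := ltP 0 u; apply/andP; split; nra.
Qed.

Lemma ratio_same_sign (u v : R) : 0 < u * v -> u != v ->
  u / (u - v) < 0 \/ 1 < u / (u - v).
Proof.
rewrite -subr_eq0 => uv uv_ne.
have def : u / (u - v) * (u - v) = u by rewrite mulfVK.
set r := u / (u - v) in def *.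
have [r0|r0] := ltP r 0; [by left | right].
have [u0|u0] := ltP 0 u; nra.
Qed.

Lemma in_triangle_of_extension a b c d (t s : R) : t < 0 -> 0 <= s <= 1 ->
  (1 - t) * a.1 + t * b.1 = (1 - s) * c.1 + s * d.1 ->
  (1 - t) * a.2 + t * b.2 = (1 - s) * c.2 + s * d.2 ->
  in_triangle a b c d.
Proof.
move=> t0 /andP [s0 s1] e1 e2.
have t1 : 1 - t != 0 by rewrite subr_eq0; apply/eqP; lra.
exists (- t / (1 - t)), ((1 - s) / (1 - t)), (s / (1 - t)).
split; try (apply: divr_ge0; lra); first by field.
split.
- have -> : a.1 = ((1 - s) * c.1 + s * d.1 - t * b.1) / (1 - t) by rewrite -e1; field.
  by field.
- have -> : a.2 = ((1 - s) * c.2 + s * d.2 - t * b.2) / (1 - t) by rewrite -e2; field.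
  by field.
Qed.

Definition lex_lt o x := o.1 < x.1 \/ o.1 = x.1 /\ o.2 < x.2.

(* The directions from o to the points lexicographically above o lie in a
   half-open half-turn, where [0 < orient o q s] is a strict order. *)
Lemma orient_trans o q (s t : R * R) : lex_lt o q -> lex_lt o s -> lex_lt o t ->
  0 < orient o q s -> 0 < orient o s t -> 0 < orient o q t.
Proof.
case: o q s t => [o1 o2] [q1 q2] [s1 s2] [t1 t2]; rewrite /lex_lt /orient /=.
move=> Hq Hs Ht qs st.
have key : (s1 - o1) * ((q1 - o1) * (t2 - o2) - (q2 - o2) * (t1 - o1)) =
  (q1 - o1) * ((s1 - o1) * (t2 - o2) - (s2 - o2) * (t1 - o1)) +
  (t1 - o1) * ((q1 - o1) * (s2 - o2) - (q2 - o2) * (s1 - o1)) by ring.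
case: Hs => [Hs|[Hs1 Hs2]].
  case: Hq => [Hq|[Hq1 Hq2]]; case: Ht => [Ht|[Ht1 Ht2]];
    rewrite -?Hq1 -?Ht1 in qs st key *; nra.
exfalso; rewrite -Hs1 in qs st.
case: Hq => [Hq|[Hq1 Hq2]]; case: Ht => [Ht|[Ht1 Ht2]];
  rewrite -?Hq1 -?Ht1 in qs st; nra.
Qed.

Lemma in_triangle_of_orient o a b c :
  0 < orient o a c -> 0 < orient o c b -> 0 <= orient a b c -> in_triangle c o a b.
Proof.
move=> oac ocb abc.
have oab_def : orient o a b = orient o a c + orient o c b + orient a b c.
  by rewrite /orient; ring.
have oab : orient o a b != 0 by rewrite oab_def; apply/eqP; lra.
exists (orient a b c / orient o a b), (orient o c b / orient o a b),
  (orient o a c / orient o a b).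
split; try (by apply: divr_ge0; lra).
- by move: oab; rewrite /orient => oab; field.
- move: oab; rewrite /orient.
  case: o a b c {oac ocb abc oab_def} => [o1 o2] [a1 a2] [b1 b2] [c1 c2] /= oab.
  by split; field.
Qed.

Lemma exists_lexmin (T : finType) (f : T -> R * R) (i : T) :
  injective f -> exists o : T, forall q : T, q != o -> lex_lt (f o) (f q).
Proof.
move=> f_inj.
pose i1 := Order.arg_min i xpredT (fun j => (f j).1).
have min1 (q : T) : (f i1).1 <= (f q).1 by rewrite /i1; case: arg_minP => // k _; apply.
pose o := Order.arg_min i1 (fun j => (f j).1 == (f i1).1) (fun j => (f j).2).
have [o1 min2] : (f o).1 = (f i1).1 /\ forall q : T, (f q).1 = (f i1).1 -> (f o).2 <= (f q).2.
  rewrite /o; case: arg_minP => // j /eqP j1 jmin.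
  by split=> // q q1; apply: jmin; rewrite /= q1.
exists o => q qo; rewrite /lex_lt o1.
have [q1|q1] := eqVneq (f i1).1 (f q).1; last by left; rewrite lt_neqAle q1 min1.
right; split=> //; rewrite lt_neqAle min2 // andbT.
apply: contra qo => /eqP o2; apply/eqP/f_inj.
by move: o1 o2 q1; case: (f o) (f q) => x1 x2 [y1 y2] /= -> -> ->.
Qed.

End Orientation.

Lemma separated_cross_or_in_triangle (R : realType) (a b c d : R * R) :
  orient a b c * orient a b d < 0 -> orient c d a != 0 -> orient c d b != 0 ->
  [\/ seg_cross a b c d, in_triangle a b c d | in_triangle b a c d].
Proof.
move=> D12 E1_ne0 E2_ne0.
have D_ne : orient a b c != orient a b d.
  by apply: contraTneq D12 => ->; rewrite -leNgt -expr2 sqr_ge0.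
have E_ne : orient c d a != orient c d b.
  by rewrite -subr_eq0 orient_diff_swap subr_eq0 eq_sym.
set t := orient c d a / (orient c d a - orient c d b).
set s := orient a b c / (orient a b c - orient a b d).
have [e1 e2] := line_intersection D_ne (erefl t) (erefl s).
have s01 : 0 <= s <= 1 by apply: ratio_opp_sign.
have [E12|E12] := ltP (orient c d a * orient c d b) 0.
  apply: Or31; exists t, s; split=> //; exact: ratio_opp_sign.
have {}E12 : 0 < orient c d a * orient c d b.
  by rewrite lt_neqAle E12 eq_sym mulf_neq0.
case: (ratio_same_sign E12 E_ne) => [t0|t1].
  by apply: Or32; exact: in_triangle_of_extension t0 s01 e1 e2.
apply: Or33; apply: (@in_triangle_of_extension _ _ _ _ _ (1 - t) s) => //.
- by rewrite subr_lt0.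
- by rewrite -e1; ring.
- by rewrite -e2; ring.
Qed.

Section PointConfiguration.
Variables (R : realType) (n : nat) (p : 'I_n -> R * R).

Lemma in_triangle_in_hull l i j k : i != l -> j != l -> k != l ->
  in_triangle (p l) (p i) (p j) (p k) -> in_hull_of_others p l.
Proof.
move=> il jl kl [k1 [k2 [k3 [k1_ge0 k2_ge0 k3_ge0 k_sum [e1 e2]]]]].
pose lam x := k1 * (x == i)%:R + k2 * (x == j)%:R + k3 * (x == k)%:R.
have lamE (F : 'I_n -> R) : \sum_x lam x * F x = k1 * F i + k2 * F j + k3 * F k.
  have delta y : \sum_x (x == y)%:R * F x = F y.
    under eq_bigr do rewrite mulr_natl mulrb.
    by rewrite -big_mkcond big_pred1_eq.
  under eq_bigr do rewrite /lam !mulrDl -!mulrA.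
  by rewrite !big_split /= -!mulr_sumr !delta.
exists lam; split.
- by move=> x; rewrite !addr_ge0 ?mulr_ge0.
- by rewrite /lam ![l == _]eq_sym (negbTE il) (negbTE jl) (negbTE kl) !mulr0 !addr0.
- by under eq_bigr do rewrite -[lam _]mulr1; rewrite lamE !mulr1.
- by rewrite lamE e1.
- by rewrite lamE e2.
Qed.

Lemma orient_neq0_distinct a b c :
  orient (p a) (p b) (p c) != 0 -> [/\ a != b, b != c & a != c].
Proof.
move=> abc; split; apply: contraNneq abc => ->;
  by rewrite ?orient_rr // orient_rot ?orient_rr // orient_rot orient_rr.
Qed.

Hypotheses (gp : general_position p) (cvx : convex_position p).

Lemma orient_neq0 i j k : i != j -> j != k -> i != k -> orient (p i) (p j) (p k) != 0.
Proof. exact: gp. Qed.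

Lemma notin_triangle l i j k : i != l -> j != l -> k != l ->
  ~ in_triangle (p l) (p i) (p j) (p k).
Proof. by move=> il jl kl /(in_triangle_in_hull il jl kl); apply: cvx. Qed.

Lemma separated_seg_cross a b c d :
  orient (p a) (p b) (p c) * orient (p a) (p b) (p d) < 0 ->
  seg_cross (p a) (p b) (p c) (p d).
Proof.
move=> sep.
have /andP [abc abd] : (orient (p a) (p b) (p c) != 0) && (orient (p a) (p b) (p d) != 0).
  by rewrite -negb_or -mulf_eq0 lt_eqF.
have [ab bc ac] := orient_neq0_distinct abc.
have [_ bd ad] := orient_neq0_distinct abd.
have cd : c != d by apply: contraTneq sep => ->; rewrite -leNgt -expr2 sqr_ge0.
have cda : orient (p c) (p d) (p a) != 0 by apply: orient_neq0; rewrite // eq_sym.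
have cdb : orient (p c) (p d) (p b) != 0 by apply: orient_neq0; rewrite // eq_sym.
case: (separated_cross_or_in_triangle sep cda cdb) => // [a_in|b_in]; exfalso.
- by apply: (notin_triangle _ _ _ a_in); rewrite // eq_sym.
- by apply: (notin_triangle _ _ _ b_in); rewrite // eq_sym.
Qed.

End PointConfiguration.

Section Depth.
Variables (n : nat) (E : {set edge n}) (r : 'I_n).

Definition walk (m : nat) (v : 'I_n) : Prop :=
  exists s, [/\ size s = m, path (adj E) r s & last r s = v].

Definition depth (v : 'I_n) : nat :=
  if pselect (exists m, `[< walk m v >]) is left h then ex_minn h else 0.

Lemma depth_min v m : walk m v -> walk (depth v) v /\ (depth v <= m)%N.
Proof.
move=> w; rewrite /depth; case: pselect => [h|[]]; last by exists m; apply/asboolP.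
by case: ex_minnP => k /asboolP wk kmin; split=> //; apply/kmin/asboolP.
Qed.

Lemma depth_parent v m : walk m v -> v != r -> exists2 u, adj E u v & (depth u < depth v)%N.
Proof.
move=> /depth_min [[s [sz ps ls]] _] vr.
move: sz ps ls; case/lastP: s => [|s w]; first by move=> _ _ /= rv; rewrite rv eqxx in vr.
rewrite last_rcons size_rcons rcons_path => sz /andP [ps sw] wv.
exists (last r s); first by rewrite -wv.
have [_] := depth_min (ex_intro _ s (And3 erefl ps erefl)).
by rewrite -sz.
Qed.

End Depth.

Lemma connected_card_le n (S : {set 'I_n}) (E : {set edge n}) :
  connected_on S E -> (#|S| <= #|E|.+1)%N.
Proof.
move=> conn; have [-> | [r rS]] := set_0Vmem S; first by rewrite cards0.
pose deeper (e : edge n) := if (depth E r e.1 < depth E r e.2)%N then e.2 else e.1.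
have sub : S :\ r \subset deeper @: E.
  apply/subsetP => v /setD1P [vr vS].
  have [s [ps ls]] := conn r v rS vS.
  have [u /orP [uv|vu] duv] := depth_parent (ex_intro _ s (And3 erefl ps ls)) vr.
    by apply/imsetP; exists (u, v); rewrite // /deeper /= duv.
  by apply/imsetP; exists (v, u); rewrite // /deeper /= ltnNge (ltnW duv).
rewrite (cardsD1 r) rS add1n ltnS.
exact: leq_trans (subset_leq_card sub) (leq_imset_card _ _).
Qed.

Lemma path_sign_change (T : Type) (R : realDomainType) (e : rel T) (f : T -> R) x s :
  path e x s -> f x * f (last x s) < 0 -> exists y z, e y z /\ f y * f z <= 0.
Proof.
elim: s x => [|y s IH] x /=; first by move=> _ neg; nra.
case/andP => exy py neg.
have [le|gt] := lerP (f x * f y) 0; first by exists x, y.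
apply: IH py _; nra.
Qed.

Section Rank.
Variables (T : finType) (lt : rel T).
Hypotheses (irr_lt : irreflexive lt) (trans_lt : transitive lt)
  (total_lt : forall x y, x != y -> lt x y || lt y x).

Definition rank (x : T) : nat := #|[set y | lt y x]|.

Lemma rank_lt x y : lt x y -> (rank x < rank y)%N.
Proof.
move=> xy; apply/proper_card/properP; split.
  by apply/subsetP => z; rewrite !inE => /trans_lt; apply.
by exists x; rewrite !inE ?irr_lt.
Qed.

Lemma rank_mono : {mono rank : x y / lt x y >-> (x < y)%N}.
Proof.
move=> x y; apply/idP/idP; last exact: rank_lt.
have [-> | xy] := eqVneq x y; first by rewrite ltnn.
by case/orP: (total_lt xy) => // /rank_lt yx /(ltn_trans yx); rewrite ltnn.
Qed.

Lemma rank_inj : injective rank.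
Proof.
move=> x y rxy; apply/eqP/negPn/negP => /total_lt.
by rewrite -!rank_mono rxy ltnn.
Qed.

Lemma rank_lt_card x : (rank x < #|T|)%N.
Proof.
rewrite -cardsT; apply/proper_card/properP; split; first exact: subsetT.
by exists x; rewrite !inE ?irr_lt.
Qed.

Lemma rank_onto k : (k < #|T|)%N -> exists x, rank x = k.
Proof.
move=> kT; pose f x : 'I_#|T| := Ordinal (rank_lt_card x).
have f_inj : injective f by move=> x y /(congr1 val) /rank_inj.
have := inj_card_onto f_inj (eq_leq (card_ord _)) (Ordinal kT).
by case/codomP => x /(congr1 val) /= kx; exists x.
Qed.

Lemma card_odd_rank : (#|T|./2 <= #|[set x | odd (rank x)]|)%N.
Proof.
have /fin_all_exists [g gE] : forall j : 'I_(#|T|./2), exists x, rank x = j.*2.+1.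
  by move=> j; apply: rank_onto; rewrite -gtn_half_double.
have g_inj : injective g.
  by move=> j k /(congr1 rank); rewrite !gE => -[/double_inj /val_inj].
have -> : #|T|./2 = #|g @: [set: 'I_(#|T|./2)]| by rewrite card_imset // cardsT card_ord.
by apply/subset_leq_card/subsetP => _ /imsetP [j _ ->]; rewrite inE gE /= odd_double.
Qed.

End Rank.

Section Crossings.
Variables (R : realType) (n : nat) (p : 'I_n -> R * R).

Lemma MST_spanning S : generic p -> spanning_tree S (MST p S).
Proof.
case=> _ _ /(_ S) [E [E_MST _]]; rewrite /MST.
by case: pickP => [E' /asboolP [] // | /(_ E)]; rewrite (asboolT E_MST).
Qed.

Lemma crossed_card_le_crRB A :
  (forall e, e \in MST p A ->
     exists2 e', e' \in MST p (~: A) & seg_cross (p e.1) (p e.2) (p e'.1) (p e'.2)) ->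
  (#|MST p A| <= crRB p A)%N.
Proof.
move=> crossed; rewrite /crRB; set X := [set ef | _].
suff sub : MST p A \subset [set ef.1 | ef in X].
  exact: leq_trans (subset_leq_card sub) (leq_imset_card _ _).
apply/subsetP => e /[dup] eA /crossed [e' e'B cr].
by apply/imsetP; exists (e, e'); rewrite // inE /= eA e'B; apply/asboolP.
Qed.

End Crossings.

Section AngularOrder.
Variables (R : realType) (n : nat) (p : 'I_n -> R * R) (o : 'I_n).
Hypotheses (gen : generic p) (cvx : convex_position p).
Hypothesis o_lexmin : forall q, q != o -> lex_lt (p o) (p q).

Let gp : general_position p. Proof. by case: gen. Qed.

Definition angle_lt : rel 'I_n := fun q r =>
  ((q == o) && (r != o)) || [&& q != o, r != o & 0 < orient (p o) (p q) (p r)].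

Lemma angle_lt_irr : irreflexive angle_lt.
Proof. by move=> q; rewrite /angle_lt orient_rr ltxx !andbF; case: (q == o). Qed.

Lemma angle_lt_trans : transitive angle_lt.
Proof.
move=> r q s; rewrite /angle_lt; have [->|qo] /= := eqVneq q o.
  by rewrite orbF => ro; rewrite (negbTE ro) /= orbF => /andP [-> _].
have [->|ro] //= := eqVneq r o; have [->|so] //= := eqVneq s o.
by apply: orient_trans; apply: o_lexmin.
Qed.

Lemma angle_lt_total q r : q != r -> angle_lt q r || angle_lt r q.
Proof.
move=> qr; rewrite /angle_lt.
have [qo|qo] := eqVneq q o; first by rewrite -qo eq_sym qr.
have [ro|ro] //= := eqVneq r o.
have : orient (p o) (p q) (p r) != 0 by apply: orient_neq0; rewrite // eq_sym.
by rewrite [orient _ (p r) _]orientNr oppr_gt0; case: ltgtP.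
Qed.

Let rk := rank angle_lt.
Let rk_mono : {mono rk : x y / angle_lt x y >-> (x < y)%N} :=
  rank_mono angle_lt_irr angle_lt_trans angle_lt_total.

Definition red := [set q | odd (rk q)].

Lemma rank_o : rk o = 0%N.
Proof.
by apply/eqP; rewrite cards_eq0; apply/eqP/setP => x; rewrite !inE /angle_lt eqxx /= !andbF.
Qed.

Lemma blue_o : o \in ~: red.
Proof. by rewrite !inE rank_o. Qed.

Lemma card_red : (n./2 <= #|red|)%N.
Proof.
by have := card_odd_rank angle_lt_irr angle_lt_trans angle_lt_total; rewrite card_ord.
Qed.

Lemma red_chord_separates a b : a \in red -> b \in red -> a != b ->
  exists2 c, c \in ~: red & orient (p a) (p b) (p o) * orient (p a) (p b) (p c) < 0.
Proof.
wlog ab : a b / (rk a < rk b)%N.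
  move=> wlog aR bR a_ne_b.
  have [ab|ba|rk_ab] := ltngtP (rk a) (rk b); first exact: wlog.
    have [|c cB sep] := wlog b a ba bR aR; first by rewrite eq_sym.
    by exists c; rewrite // !(orientNl (p b)) mulrNN.
  by move: a_ne_b; rewrite (rank_inj angle_lt_irr angle_lt_trans angle_lt_total rk_ab) eqxx.
rewrite !inE => aR bR a_ne_b.
have ab' : ((rk a).+1 < rk b)%N.
  by rewrite ltn_neqAle ab andbT; apply: contraTneq bR => <- /=; rewrite aR.
have [c rc] : exists c, rk c = (rk a).+1.
  apply: (rank_onto angle_lt_irr angle_lt_trans angle_lt_total).
  exact: ltn_trans ab' (rank_lt_card angle_lt_irr b).
have neq_o x : (0 < rk x)%N -> x != o by apply: contraTneq => ->; rewrite rank_o.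
have [ao bo co] : [/\ a != o, b != o & c != o].
  by split; apply: neq_o; [exact: odd_gt0 | exact: odd_gt0 | rewrite rc].
have := rk_mono a c; have := rk_mono c b; have := rk_mono a b.
rewrite ab rc ltnSn ab' /angle_lt (negbTE ao) (negbTE bo) (negbTE co) /=.
move=> /esym oab /esym ocb /esym oac.
exists c; first by rewrite !inE rc /= aR.
rewrite pmulr_rlt0; last by rewrite 2!orient_rot.
have ac : a != c by apply/eqP => ac; apply: (@n_Sn (rk a)); rewrite -rc ac.
have bc : b != c by apply/eqP => bc; move: ab'; rewrite -rc bc ltnn.
rewrite lt_neqAle (orient_neq0 gp) //= leNgt; apply/negP => /ltW abc.
have oc : o != c by rewrite eq_sym.
exact: (notin_triangle cvx oc ac bc (in_triangle_of_orient oac ocb abc)).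
Qed.

Lemma red_chord_crossed a b (EB : {set edge n}) :
  a \in red -> b \in red -> a != b ->
  edges_in (~: red) EB -> connected_on (~: red) EB ->
  exists2 e, e \in EB & seg_cross (p a) (p b) (p e.1) (p e.2).
Proof.
move=> aR bR ab EB_blue EB_conn.
have [c cB sep] := red_chord_separates aR bR ab.
have [s [ps ls]] := EB_conn o c blue_o cB.
pose f x := orient (p a) (p b) (p x).
have [y [z [yz fyz]]] : exists y z, adj EB y z /\ f y * f z <= 0.
  by apply: (path_sign_change ps); rewrite ls.
have f_neq0 x : x \in ~: red -> f x != 0.
  move=> xB; apply: (orient_neq0 gp) => //;
    by apply: contraTneq xB => <-; rewrite inE negbK.
have cross e : e \in EB -> f e.1 * f e.2 <= 0 -> seg_cross (p a) (p b) (p e.1) (p e.2).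
  move=> eB le0; have [_ e1B e2B] := EB_blue e eB.
  by apply: (separated_seg_cross gp cvx); rewrite lt_neqAle le0 mulf_neq0 ?f_neq0.
case/orP: yz => [yz | zy]; first by exists (y, z); last exact: cross.
by exists (z, y); last by apply: cross; rewrite // mulrC.
Qed.

Lemma crRB_red_ge : (n./2 - 1 <= crRB p red)%N.
Proof.
have [[red_in red_conn _] [blue_in blue_conn _]] :=
  (MST_spanning red gen, MST_spanning (~: red) gen).
apply: (@leq_trans #|MST p red|).
  by rewrite leq_subLR add1n (leq_trans card_red) ?connected_card_le.
apply: crossed_card_le_crRB => e eR; have [e12 e1R e2R] := red_in e eR.
by apply: red_chord_crossed => //; apply: contraTneq e12 => ->; rewrite ltnn.
Qed.

End AngularOrder.

Theorem theorem4 (R : realType) (n : nat) (p : 'I_n -> R * R) :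
  generic p -> convex_position p -> (n./2 - 1 <= cr p)%N.
Proof.
case: n p => [|m] p gen cvx; first by [].
have [o o_lexmin] : exists o, forall q, q != o -> lex_lt (p o) (p q).
  by apply: (exists_lexmin ord0); case: gen.
apply: leq_trans (crRB_red_ge gen cvx o_lexmin) _.
exact: leq_bigmax.
Qed.
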